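(* For all $\alpha>0$ and $\delta>0$ there exists $\varepsilon=\varepsilon(\alpha,\delta)>0$ such that for every $p>0$, every $\varepsilon$-typical $(\varepsilon,p)$-regular triple $(V_1,V_2,V_3)$ in a graph, in which each pair $(V_i,V_j)$ has density at least $\delta p$, contains $(1-\alpha)\min_i|V_i|$ vertex-disjoint triangles, each with one vertex in each of $V_1,V_2,V_3$.
   Context: For disjoint $X,Y$, $d(X,Y)=e(X,Y)/(|X||Y|)$; $x=(1\pm a)y$ means $x\in[(1-a)y,(1+a)y]$. A pair $(X,Y)$ is $(\varepsilon,p)$-regular if $|d(X,Y)-d(X',Y')|\le\varepsilon p$ for all $X'\subset X,Y'\subset Y$ with $|X'|\ge\varepsilon|X|,|Y'|\ge\varepsilon|Y|$; a triple of pairwise disjoint sets is $(\varepsilon,p)$-regular if all three of its pairs are. For a triple $(V_1,V_2,V_3)$ write $d(V_i,V_j)=d_{ij}p$. For $\{i,j,k\}=\{1,2,3\}$, a vertex $v\in V_i$ is $\varepsilon$-typical if with $N_j=N(v)\cap V_j$, $N_k=N(v)\cap V_k$: $|N_j|=(1\pm\varepsilon)d_{ij}p|V_j|$, $|N_k|=(1\pm\varepsilon)d_{ik}p|V_k|$, and there exist $N_j'\subset N_j$, $N_k'\subset N_k$ with $|N_j'|\ge(1-\varepsilon)|N_j|$, $|N_k'|\ge(1-\varepsilon)|N_k|$ such that $(N_j',N_k')$ is $(\varepsilon,p)$-regular of density $(1\pm\varepsilon)d_{jk}p$. The triple is $\varepsilon$-typical if it is $(\varepsilon,p)$-regular and for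 each $i$ all but at most $\varepsilon|V_i|$ vertices of $V_i$ are $\varepsilon$-typical. *)

From HB Require Import structures.
From mathcomp Require Import all_boot all_order all_algebra.
Set Implicit Arguments. Unset Strict Implicit. Unset Printing Implicit Defensive.
Import Order.TTheory GRing.Theory Num.Theory.
Local Open Scope ring_scope.

Section Defs.
Variable R : realFieldType.
Variable T : finType.
Variable e : rel T.

Definition edges (X Y : {set T}) : nat := #|[set u in setX X Y | e u.1 u.2]|.

Definition dens (X Y : {set T}) : R := (edges X Y)%:R / (#|X| * #|Y|)%:R.

Definition approx (a x y : R) : Prop := (1 - a) * y <= x /\ x <= (1 + a) * y.

Definition regular_pair (eps p : R) (X Y : {set T}) : Prop :=
  forall X' Y' : {set T}, X' \subset X -> Y' \subset Y ->
    eps * #|X|%:R <= #|X'|%:R -> eps * #|Y|%:R <= #|Y'|%:R ->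
    `|dens X Y - dens X' Y'| <= eps * p.

Definition regular_triple (eps p : R) (V1 V2 V3 : {set T}) : Prop :=
  [/\ regular_pair eps p V1 V2, regular_pair eps p V1 V3 & regular_pair eps p V2 V3].

(* v in Vi is eps-typical w.r.t. (Vj, Vk); note d_ij p = dens Vi Vj *)
Definition typical_vertex (eps p : R) (Vi Vj Vk : {set T}) (v : T) : Prop :=
  let Nj := [set u in Vj | e v u] in
  let Nk := [set u in Vk | e v u] in
  [/\ approx eps #|Nj|%:R (dens Vi Vj * #|Vj|%:R),
      approx eps #|Nk|%:R (dens Vi Vk * #|Vk|%:R) &
      (exists Nj' Nk' : {set T},
        [/\ Nj' \subset Nj, Nk' \subset Nk,
            (1 - eps) * #|Nj|%:R <= #|Nj'|%:R,
            (1 - eps) * #|Nk|%:R <= #|Nk'|%:R &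
            regular_pair eps p Nj' Nk' /\
            approx eps (dens Nj' Nk') (dens Vj Vk)])].

Definition mostly_typical (eps p : R) (Vi Vj Vk : {set T}) : Prop :=
  exists B : {set T}, #|B|%:R <= eps * #|Vi|%:R /\
    forall v, v \in Vi -> v \notin B -> typical_vertex eps p Vi Vj Vk v.

Definition typical_triple (eps p : R) (V1 V2 V3 : {set T}) : Prop :=
  [/\ regular_triple eps p V1 V2 V3,
      mostly_typical eps p V1 V2 V3,
      mostly_typical eps p V2 V1 V3 &
      mostly_typical eps p V3 V1 V2].

Definition cross_triangle (V1 V2 V3 : {set T}) (t : T * T * T) : bool :=
  [&& t.1.1 \in V1, t.1.2 \in V2, t.2 \in V3,
      e t.1.1 t.1.2, e t.1.1 t.2 & e t.1.2 t.2].

Definition vertex_disjoint (s : seq (T * T * T)) : bool :=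
  uniq (flatten [seq [:: t.1.1; t.1.2; t.2] | t <- s]).

End Defs.

From HB Require Import structures.
From mathcomp Require Import all_boot all_order all_algebra.
From mathcomp Require Import reals lra.
Set Implicit Arguments. Unset Strict Implicit. Unset Printing Implicit Defensive.
Import Order.TTheory GRing.Theory Num.Theory.
Local Open Scope ring_scope.

(* Greedy embedding with eps = min(alpha, delta, 1) / 10.  As long as fewer than
   (1 - alpha) min |Vi| triangles have been found, more than alpha |Vi| vertices of
   each Vi are still free.  Regularity of (V1,V2) and (V1,V3) makes all but
   2 eps |V1| vertices of V1 have the expected degree into the free parts of V2
   and V3; picking such a free vertex v that is also typical, the regular pair
   inside its neighbourhood still has positive density between the free parts
   of the two neighbourhoods, which yields an edge and hence a new triangle. *)

Lemma edges_sum_nbhd (T : finType) (e : rel T) (X Y : {set T}) :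
  edges e X Y = (\sum_(x in X) #|[set y in Y | e x y]|)%N.
Proof.
rewrite /edges -sum1_card big_mkcond.
set S := [set u in _ | _].
have -> : (\sum_(u : T * T) (if u \in S then 1 else 0)
           = \sum_(x : T) \sum_(y : T) (if (x, y) \in S then 1 else 0))%N.
  by rewrite pair_bigA; apply: eq_bigr => -[x y].
rewrite [RHS]big_mkcond; apply: eq_bigr => x _.
case: ifP => xX; last by rewrite big1 // => y _; rewrite /S !inE /= xX.
by rewrite -sum1_card [RHS]big_mkcond; apply: eq_bigr => y _; rewrite /S !inE /= xX.
Qed.

Lemma dens_gt0_edge (R : realFieldType) (T : finType) (e : rel T) (X Y : {set T}) :
  0 < dens R e X Y -> exists x y, [/\ x \in X, y \in Y & e x y].
Proof.
move=> d_gt0; have [[x y]] : exists u, u \in [set u in setX X Y | e u.1 u.2].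
  apply/set0Pn; apply: contraTneq d_gt0 => E.
  by rewrite /dens /edges E cards0 mul0r ltxx.
by rewrite !inE /= => /andP[/andP[xX yY] exy]; exists x, y.
Qed.

(* The low-degree vertices would otherwise form a witness against regularity. *)
Lemma regular_few_low_degree (R : realFieldType) (T : finType) (e : rel T)
    (eps p : R) (X Y Y' : {set T}) :
  0 <= eps -> regular_pair e eps p X Y -> Y' \subset Y ->
  eps * #|Y|%:R <= #|Y'|%:R ->
  #|[set x in X | #|[set y in Y' | e x y]|%:R < (dens R e X Y - eps * p) * #|Y'|%:R]|%:R
    <= eps * #|X|%:R.
Proof.
move=> eps_ge0 regXY sY'Y bigY'.
set c := dens R e X Y - eps * p; set L := [set x in X | _].
rewrite leNgt; apply/negP => bigL.
have sLX : L \subset X by apply/subsetP => x; rewrite inE => /andP[].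
have dens_ge : c <= dens R e L Y'.
  have := regXY L Y' sLX sY'Y (ltW bigL) bigY'.
  by move=> /(le_trans (ler_norm _)); rewrite /c; lra.
have [x xL] : exists x, x \in L.
  apply/set0Pn; apply: contraTneq bigL => ->.
  by rewrite cards0 -leNgt mulr_ge0.
have L_gt0 : (0 : R) < #|L|%:R by rewrite ltr0n card_gt0; apply/set0Pn; exists x.
have Y'_gt0 : (0 : R) < #|Y'|%:R.
  move: (xL); rewrite inE => /andP[_]; rewrite lt0r ler0n andbT.
  by apply: contraTneq => ->; rewrite mulr0 -leNgt.
suff : dens R e L Y' < c by rewrite ltNge dens_ge.
rewrite /dens natrM ltr_pdivrMr ?mulr_gt0 // edges_sum_nbhd natr_sum.
apply: (@lt_le_trans _ _ (\sum_(x in L) c * #|Y'|%:R)).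
  apply: ltr_sum; first by apply/hasP; exists x => //; exact: mem_index_enum.
  by move=> y; rewrite inE => /andP[].
by rewrite sumr_const -[_ *+ #|L|]mulr_natr mulrAC -mulrA.
Qed.

Lemma slack_degree_ge (R : realFieldType) (eps alpha D q n u v : R) :
  0 <= eps -> 10 * eps <= alpha -> 10 * eps <= 1 -> 0 <= q -> 10 * q <= D ->
  0 <= v -> n <= (1 + eps) * (D * v) -> alpha * v < u ->
  2 * eps * n <= (D - q) * u.
Proof.
move=> eps_ge0 eps_alpha eps_le1 q_ge0 q_D v_ge0 n_le u_gt.
have Dv_ge0 : 0 <= D * v by apply: mulr_ge0 => //; lra.
have u_ge0 : 0 <= u.
  have : 0 <= alpha * v by apply: mulr_ge0 => //; lra.
  lra.
have h1 : 2 * eps * n <= 2 * eps * ((1 + eps) * (D * v)).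
  by apply: ler_wpM2l; lra.
have h2 : 2 * eps * ((1 + eps) * (D * v)) <= 9 * eps * (D * v).
  have : eps * eps * (D * v) <= 1 / 10 * eps * (D * v).
    by apply: ler_wpM2r => //; nra.
  have : 0 <= eps * eps * (D * v) by rewrite mulr_ge0 // mulr_ge0.
  lra.
have h3 : 9 * eps * (D * v) <= 9 / 10 * D * (alpha * v).
  have : eps * (D * v) <= alpha / 10 * (D * v) by apply: ler_wpM2r => //; lra.
  lra.
have h4 : 9 / 10 * D * (alpha * v) <= 9 / 10 * D * u by apply: ler_wpM2l; lra.
have h5 : 9 / 10 * D * u <= (D - q) * u by apply: ler_wpM2r => //; lra.
lra.
Qed.

(* [N'] is the part of the neighbourhood of [v] carrying the regular pair of a
   typical vertex. *)
Lemma nbhd_trace_large (R : realFieldType) (T : finType) (e : rel T)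
    (eps alpha D q : R) (V U N' : {set T}) (v : T) :
  0 <= eps -> 10 * eps <= alpha -> 10 * eps <= 1 -> 0 <= q -> 10 * q <= D ->
  U \subset V -> alpha * #|V|%:R < #|U|%:R ->
  (D - q) * #|U|%:R <= #|[set y in U | e v y]|%:R ->
  N' \subset [set y in V | e v y] ->
  (1 - eps) * #|[set y in V | e v y]|%:R <= #|N'|%:R ->
  #|[set y in V | e v y]|%:R <= (1 + eps) * (D * #|V|%:R) ->
  eps * #|N'|%:R <= #|N' :&: U|%:R.
Proof.
move=> eps_ge0 eps_alpha eps_le1 q_ge0 q_D sUV bigU degU sN'N bigN' N_le.
set N := [set y in V | e v y] in sN'N bigN' N_le.
have degU_le : (#|[set y in U | e v y]| <= #|N' :&: U| + #|N :\: N'|)%N.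
  apply: leq_trans (leq_card_setU _ _).1; apply: subset_leq_card.
  apply/subsetP => y; rewrite !inE => /andP[yU evy].
  by case: (y \in N'); rewrite /= ?yU ?orbT // evy (subsetP sUV).
have cardN : (#|N'| + #|N :\: N'| = #|N|)%N.
  by rewrite -(cardsID N' N) (setIidPr sN'N).
have N'_le : eps * #|N'|%:R <= eps * #|N|%:R.
  by apply: ler_wpM2l => //; rewrite ler_nat subset_leq_card.
have := slack_degree_ge eps_ge0 eps_alpha eps_le1 q_ge0 q_D (ler0n _ #|V|)
  N_le bigU.
move: degU_le; rewrite -(ler_nat R) natrD => degU_le.
move: cardN => /(congr1 (GRing.natmul (1 : R)))/[!natrD] cardN.
lra.
Qed.

Definition covered (T : finType) (s : seq (T * T * T)) : {set T} :=
  [set x | x \in flatten [seq [:: t.1.1; t.1.2; t.2] | t <- s]].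

Lemma card_setI_covered_le (T : finType) (V : {set T}) (s : seq (T * T * T))
    (f : T * T * T -> T) :
  (forall t, t \in s -> forall x, x \in [:: t.1.1; t.1.2; t.2] -> x \in V -> x = f t) ->
  (#|V :&: covered s| <= size s)%N.
Proof.
move=> only_f; apply: (@leq_trans #|[set x in map f s]|).
  apply: subset_leq_card; apply/subsetP => x; rewrite !inE => /andP[xV].
  by move/flatten_mapP => [t ts xt]; rewrite (only_f t ts x xt xV) map_f.
by rewrite -(size_map f s) cardsE card_size.
Qed.

Lemma uncovered_large (R : realFieldType) (T : finType) (alpha : R)
    (V C : {set T}) (k m : nat) :
  (m <= #|V|)%N -> (#|V :&: C| <= k)%N -> k%:R < (1 - alpha) * m%:R ->
  alpha * #|V|%:R < #|V :\: C|%:R.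
Proof.
move=> m_le VC_le k_lt.
have alpha_lt1 : 0 < 1 - alpha.
  rewrite ltNge; apply: contraTN k_lt => alpha_ge1; rewrite -leNgt.
  by apply: le_trans (ler0n _ k); rewrite mulr_le0_ge0.
have : (1 - alpha) * m%:R <= (1 - alpha) * #|V|%:R.
  by apply: ler_wpM2l; [exact: ltW | rewrite ler_nat].
move: VC_le; rewrite -(ler_nat R) => VC_le.
have := cardsID C V => /(congr1 (GRing.natmul (1 : R)))/[!natrD].
lra.
Qed.

Lemma exists_notin_small_sets (T : finType) (U A B C : {set T}) :
  (#|A| + #|B| + #|C| < #|U|)%N ->
  exists v, [/\ v \in U, v \notin A, v \notin B & v \notin C].
Proof.
move=> small; have : U \subset A :|: B :|: C = false.
  apply: contra_leqF small => /subset_leq_card U_le.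
  apply: leq_trans U_le _; apply: leq_trans (leq_card_setU _ _).1 _.
  by rewrite leq_add2r (leq_card_setU _ _).1.
by move=> /negbT/subsetPn[v vU]; rewrite !inE => /norP[/norP[vA vB] vC]; exists v.
Qed.

Section CrossTriangles.
Variables (T : finType) (e : rel T) (V1 V2 V3 : {set T}).
Hypotheses (dis12 : [disjoint V1 & V2]) (dis13 : [disjoint V1 & V3])
  (dis23 : [disjoint V2 & V3]).

Lemma card_covered_cross (s : seq (T * T * T)) :
  all (cross_triangle e V1 V2 V3) s ->
  [/\ (#|V1 :&: covered s| <= size s)%N, (#|V2 :&: covered s| <= size s)%N
    & (#|V3 :&: covered s| <= size s)%N].
Proof.
move=> /allP cross_s.
have parts t : t \in s -> [/\ t.1.1 \in V1, t.1.2 \in V2 & t.2 \in V3].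
  by move/cross_s => /and4P[? ? ? _].
split; [apply: (@card_setI_covered_le _ _ _ (fun t => t.1.1))
       | apply: (@card_setI_covered_le _ _ _ (fun t => t.1.2))
       | apply: (@card_setI_covered_le _ _ _ (fun t => t.2))];
  move=> t /parts[t1 t2 t3] x; rewrite !inE => /or3P[] /eqP-> // xV.
- by rewrite (disjointFr dis12 xV) in t2.
- by rewrite (disjointFr dis13 xV) in t3.
- by rewrite (disjointFl dis12 xV) in t1.
- by rewrite (disjointFr dis23 xV) in t3.
- by rewrite (disjointFl dis13 xV) in t1.
- by rewrite (disjointFl dis23 xV) in t2.
Qed.

Lemma vertex_disjoint_cons (t : T * T * T) (s : seq (T * T * T)) :
  cross_triangle e V1 V2 V3 t -> vertex_disjoint s ->
  t.1.1 \notin covered s -> t.1.2 \notin covered s -> t.2 \notin covered s ->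
  vertex_disjoint (t :: s).
Proof.
case: t => [[x1 x2] x3]; rewrite /cross_triangle /= => /and4P[x1V x2V x3V _].
rewrite /vertex_disjoint /= => -> x1s x2s x3s; rewrite !inE in x1s x2s x3s.
rewrite !inE !negb_or x1s x2s x3s !andbT.
have neq (X Y : {set T}) x y : [disjoint X & Y] -> x \in X -> y \in Y -> x != y.
  by move=> dXY xX yY; apply: contraTneq yY => <-; rewrite (disjointFr dXY xX).
by rewrite (neq _ _ _ _ dis12 x1V x2V) (neq _ _ _ _ dis13 x1V x3V)
  (neq _ _ _ _ dis23 x2V x3V).
Qed.

End CrossTriangles.

Section GreedyStep.
Variables (R : realFieldType) (T : finType) (e : rel T).
Variables (alpha delta eps p : R) (V1 V2 V3 : {set T}).
Hypotheses (eps_gt0 : 0 < eps) (eps_alpha : 10 * eps <= alpha)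
  (eps_delta : 10 * eps <= delta) (eps_le1 : 10 * eps <= 1) (p_gt0 : 0 < p).
Hypotheses (dens12 : delta * p <= dens R e V1 V2)
  (dens13 : delta * p <= dens R e V1 V3) (dens23 : delta * p <= dens R e V2 V3).

Lemma slack_le_dens (X Y : {set T}) :
  delta * p <= dens R e X Y -> 10 * (eps * p) <= dens R e X Y.
Proof. by apply: le_trans; rewrite mulrA ler_wpM2r // ltW. Qed.

Lemma typical_vertex_triangle (v : T) (U2 U3 : {set T}) :
  typical_vertex e eps p V1 V2 V3 v -> U2 \subset V2 -> U3 \subset V3 ->
  alpha * #|V2|%:R < #|U2|%:R -> alpha * #|V3|%:R < #|U3|%:R ->
  (dens R e V1 V2 - eps * p) * #|U2|%:R <= #|[set y in U2 | e v y]|%:R ->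
  (dens R e V1 V3 - eps * p) * #|U3|%:R <= #|[set y in U3 | e v y]|%:R ->
  exists x2 x3, [/\ x2 \in U2, x3 \in U3 & [&& e v x2, e v x3 & e x2 x3]].
Proof.
move=> [[_ N2_le] [_ N3_le] [N2' [N3' [sN2 sN3 bigN2 bigN3 [regN densN]]]]].
move=> sU2 sU3 bigU2 bigU3 degU2 degU3.
have epsp_ge0 : 0 <= eps * p by rewrite mulr_ge0 ?ltW.
have trace2 := nbhd_trace_large (ltW eps_gt0) eps_alpha eps_le1 epsp_ge0
  (slack_le_dens dens12) sU2 bigU2 degU2 sN2 bigN2 N2_le.
have trace3 := nbhd_trace_large (ltW eps_gt0) eps_alpha eps_le1 epsp_ge0
  (slack_le_dens dens13) sU3 bigU3 degU3 sN3 bigN3 N3_le.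
have := regN _ _ (subsetIl N2' U2) (subsetIl N3' U3) trace2 trace3.
move=> /(le_trans (ler_norm _)) dens_trace.
have : 0 < dens R e (N2' :&: U2) (N3' :&: U3).
  have : 9 / 10 * (10 * (eps * p)) <= (1 - eps) * dens R e V2 V3.
    apply: ler_pM; [lra | by rewrite mulr_ge0 | | exact: slack_le_dens].
    by move: eps_le1; lra.
  have : 0 < eps * p by apply: mulr_gt0.
  case: densN; lra.
move=> /dens_gt0_edge[x2 [x3 []]].
rewrite !inE => /andP[x2N2 x2U2] /andP[x3N3 x3U3] e23.
have := subsetP sN2 x2 x2N2; rewrite inE => /andP[_ e12].
have := subsetP sN3 x3 x3N3; rewrite inE => /andP[_ e13].
by exists x2, x3; rewrite e12 e13 e23.
Qed.

Hypotheses (dis12 : [disjoint V1 & V2]) (dis13 : [disjoint V1 & V3])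
  (dis23 : [disjoint V2 & V3]).

Lemma cross_triangle_extend (s : seq (T * T * T)) :
  typical_triple e eps p V1 V2 V3 ->
  all (cross_triangle e V1 V2 V3) s -> vertex_disjoint s ->
  (size s)%:R < (1 - alpha) * (minn #|V1| (minn #|V2| #|V3|))%:R ->
  exists t, cross_triangle e V1 V2 V3 t && vertex_disjoint (t :: s).
Proof.
move=> [[reg12 reg13 _] [B [smallB typB]] _ _] cross_s disj_s small_s.
have [cov1 cov2 cov3] := card_covered_cross dis12 dis13 dis23 cross_s.
set C := covered s in cov1 cov2 cov3.
have bigU1 := uncovered_large (geq_minl _ _) cov1 small_s.
have bigU2 := uncovered_large (leq_trans (geq_minr _ _) (geq_minl _ _)) cov2 small_s.
have bigU3 := uncovered_large (leq_trans (geq_minr _ _) (geq_minr _ _)) cov3 small_s.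
have eps_le_alpha (V : {set T}) :
    alpha * #|V|%:R < #|V :\: C|%:R -> eps * #|V|%:R <= #|V :\: C|%:R.
  move=> /ltW; apply: le_trans; apply: ler_wpM2r => //.
  by move: eps_alpha eps_gt0; lra.
have smallL2 := regular_few_low_degree (ltW eps_gt0) reg12 (subsetDl V2 C)
  (eps_le_alpha _ bigU2).
have smallL3 := regular_few_low_degree (ltW eps_gt0) reg13 (subsetDl V3 C)
  (eps_le_alpha _ bigU3).
set L2 := [set x in V1 | _] in smallL2; set L3 := [set x in V1 | _] in smallL3.
have [v [vU1 vL2 vL3 vB]] :
    exists v, [/\ v \in V1 :\: C, v \notin L2, v \notin L3 & v \notin B].
  apply: exists_notin_small_sets; rewrite -(ltr_nat R) !natrD.
  have : 3 * eps * #|V1|%:R <= alpha * #|V1|%:R.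
    by apply: ler_wpM2r => //; move: eps_alpha eps_gt0; lra.
  lra.
move: vU1 vL2 vL3; rewrite !inE => /andP[vC vV1]; rewrite vV1 /= -!leNgt => degU2 degU3.
have [x2 [x3 [x2U x3U /and3P[e12 e13 e23]]]] := typical_vertex_triangle (typB v vV1 vB)
  (subsetDl V2 C) (subsetDl V3 C) bigU2 bigU3 degU2 degU3.
move: x2U x3U; rewrite !inE => /andP[x2C x2V] /andP[x3C x3V].
have cross_t : cross_triangle e V1 V2 V3 (v, x2, x3).
  by rewrite /cross_triangle /= vV1 x2V x3V e12 e13 e23.
exists (v, x2, x3); rewrite cross_t.
by apply: (vertex_disjoint_cons dis12 dis13 dis23 cross_t disj_s); rewrite inE.
Qed.

End GreedyStep.

Lemma greedy_packing (R : realDomainType) (A : Type) (P : seq A -> Prop)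
    (b : R) (n : nat) :
  P [::] -> b <= n%:R ->
  (forall s, P s -> (size s)%:R < b -> exists a, P (a :: s)) ->
  exists2 s, P s & b <= (size s)%:R.
Proof.
move=> P_nil b_le step.
suff [s Ps [b_le_s | n_le_s]] : exists2 s, P s & b <= (size s)%:R \/ (n <= size s)%N.
- by exists s.
- by exists s => //; apply: le_trans b_le _; rewrite ler_nat.
elim: n {b_le} => [|n [s Ps [b_le_s | n_le_s]]]; first by exists [::]; last right.
  by exists s; last left.
have [b_le_s | s_lt_b] := lerP b (size s)%:R; first by exists s; last left.
by have [a Pas] := step s Ps s_lt_b; exists (a :: s); last right.
Qed.

Theorem proposition2p7 (R : realType) (alpha delta : R) :
  0 < alpha -> 0 < delta ->
  exists2 eps : R, 0 < eps &
    forall (p : R) (T : finType) (e : rel T) (V1 V2 V3 : {set T}),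
      0 < p -> symmetric e -> irreflexive e ->
      [disjoint V1 & V2] -> [disjoint V1 & V3] -> [disjoint V2 & V3] ->
      typical_triple e eps p V1 V2 V3 ->
      delta * p <= dens R e V1 V2 -> delta * p <= dens R e V1 V3 ->
      delta * p <= dens R e V2 V3 ->
      exists s : seq (T * T * T),
        [/\ all (cross_triangle e V1 V2 V3) s, vertex_disjoint s &
            (1 - alpha) * (minn #|V1| (minn #|V2| #|V3|))%:R <= (size s)%:R].
Proof.
move=> alpha_gt0 delta_gt0.
pose mu := Num.min alpha (Num.min delta 1).
have mu_gt0 : 0 < mu by rewrite !lt_min alpha_gt0 delta_gt0 ltr01.
have eps_gt0 : 0 < mu / 10 by rewrite divr_gt0.
have [eps_alpha eps_delta eps_le1] :
    [/\ 10 * (mu / 10) <= alpha, 10 * (mu / 10) <= delta & 10 * (mu / 10) <= 1].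
  by rewrite mulrC divfK ?pnatr_eq0 //; split; rewrite !ge_min lexx ?orbT.
exists (mu / 10) => // p T e V1 V2 V3 p_gt0 _ _ dis12 dis13 dis23 typ d12 d13 d23.
set m := minn _ _.
have m_ge : (1 - alpha) * m%:R <= m%:R.
  have : 0 <= alpha * m%:R by rewrite mulr_ge0 // ltW.
  lra.
have extend s : all (cross_triangle e V1 V2 V3) s && vertex_disjoint s ->
    (size s)%:R < (1 - alpha) * m%:R ->
    exists t, all (cross_triangle e V1 V2 V3) (t :: s) && vertex_disjoint (t :: s).
  move=> /andP[cross_s disj_s] small_s.
  have [t /andP[cross_t disj_t]] := cross_triangle_extend eps_gt0
    eps_alpha eps_delta eps_le1 p_gt0 d12 d13 d23
    dis12 dis13 dis23 typ cross_s disj_s small_s.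
  by exists t; rewrite /= cross_t cross_s.
have [s /andP[cross_s disj_s] big_s] := greedy_packing (isT : true) m_ge extend.
by exists s.
Qed.
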